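(* Let $k\ge1$, $d\ge1$ and $n_1,\dots,n_k\ge2$ be integers. For every $\Sigma\in\Sigma_k(n_1,\dots,n_k)$, the linear automorphism of $W_k(d;n_1,\dots,n_k)$ given by the action of $\Sigma$ changes the orientation according to $\mathrm{orient}(\Sigma)$, i.e. it preserves orientation if $\mathrm{orient}(\Sigma)=+1$ and reverses it if $\mathrm{orient}(\Sigma)=-1$. In particular $\mathrm{orient}:\Sigma_k(n_1,\dots,n_k)\to(\{-1,+1\},\cdot)$ is a group homomorphism.
   Context: $W_n=\{x\in\mathbb{R}^n:\sum x_i=0\}$ with $S_n$ acting by $\sigma\cdot(x_1,\dots,x_n)=(x_{\sigma^{-1}(1)},\dots,x_{\sigma^{-1}(n)})$. Wreath product action: if $G$ acts on $X$ and $S_n$ on $Y$, $G^{\times n}\rtimes S_n$ ($S_n$ permuting factors) acts on $X^{\times n}\times Y$ by $(g_1,\dots,g_n;\sigma)\cdot(x_1,\dots,x_n;y)=(g_1x_{\sigma^{-1}(1)},\dots,g_nx_{\sigma^{-1}(n)};\sigma y)$. $\Sigma_1(n_1)=S_{n_1}$, $\Sigma_k(n_1,\dots,n_k)=\Sigma_{k-1}(n_1,\dots,n_{k-1})^{\times n_k}\rtimes S_{n_k}$. $W_1(d;n_1)=W_{n_1}^{\oplus(d-1)}$ (as $\{(z_1,\dots,z_{n_1})\in(\mathbb{R}^{d-1})^{n_1}:\sum z_i=0\}$ with $S_{n_1}$ permuting the $z_i$), $W_k(d;n_1,\dots,n_k)=W_{k-1}(d;n_1,\dots,n_{k-1})^{\oplus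 n_k}\oplus W_{n_k}^{\oplus(d-1)}$ with the inductively defined wreath product action. The orientation function $\mathrm{orient}:\Sigma_k(n_1,\dots,n_k)\to\{-1,+1\}$ is defined by $\mathrm{orient}(\sigma)=(\mathrm{sgn}\,\sigma)^{d-1}$ for $k=1$, and for $k\ge2$ by $\mathrm{orient}(\Sigma_1,\dots,\Sigma_{n_k};\sigma)=(\mathrm{sgn}\,\sigma)^{(d-1)n_1\cdots n_{k-1}}\cdot\mathrm{orient}(\Sigma_1)\cdots\mathrm{orient}(\Sigma_{n_k})$. *)

From HB Require Import structures.
From mathcomp Require Import all_boot all_order all_algebra all_fingroup.
Set Implicit Arguments. Unset Strict Implicit. Unset Printing Implicit Defensive.
Import Order.TTheory GRing.Theory Num.Theory.
Local Open Scope ring_scope.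

(* Conventions: the parameters (n_1, ..., n_k) are given as n1 : nat and the
   list ns = [:: n_k; n_(k-1); ...; n_2] (outermost level first), so that
   k = (size ns).+1.  All objects below are defined by recursion on ns,
   following the inductive definitions Sigma_k = Sigma_(k-1)^(n_k) x| S_(n_k)
   and W_k = W_(k-1)^(n_k) (+) W_(n_k)^(d-1). *)

Fixpoint SigmaT (n1 : nat) (ns : seq nat) : Type :=
  match ns with
  | [::] => 'S_n1
  | nk :: rest => ({ffun 'I_nk -> SigmaT n1 rest} * 'S_nk)%type
  end.

(* group law of the wreath product:
   (g; s) (h; t) = (i |-> g_i h_(s^-1 i) ; s o t).
   mathcomp's product of permutations is left-to-right: (t * s) = s o t. *)
Fixpoint Smul (n1 : nat) (ns : seq nat) : SigmaT n1 ns -> SigmaT n1 ns -> SigmaT n1 ns :=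
  match ns return SigmaT n1 ns -> SigmaT n1 ns -> SigmaT n1 ns with
  | [::] => fun s t => (t * s)%g
  | nk :: rest => fun X Y =>
      ([ffun i => Smul (X.1 i) (Y.1 (X.2^-1 i)%g)], (Y.2 * X.2)%g)
  end.

Definition sgnp (n : nat) (s : 'S_n) : int := (-1) ^+ odd_perm s.

Fixpoint orient (d n1 : nat) (ns : seq nat) : SigmaT n1 ns -> int :=
  match ns return SigmaT n1 ns -> int with
  | [::] => fun s => sgnp s ^+ (d - 1)
  | nk :: rest => fun X =>
      sgnp X.2 ^+ ((d - 1) * (n1 * \prod_(n <- rest) n))
      * \prod_(i < nk) orient d (X.1 i)
  end.

(* Coordinates of the ambient space containing W_k:
   level 1: (R^(d-1))^(n1), coordinate (a, i) = a-th coordinate of z_i;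
   level k: (ambient_(k-1))^(n_k) (+) (R^(n_k))^(d-1),
   inl (i, p) = coordinate p of the i-th copy, inr (a, i) = i-th coordinate of
   the a-th copy of R^(n_k). *)
Fixpoint Idx (d n1 : nat) (ns : seq nat) : finType :=
  match ns with
  | [::] => ('I_(d - 1) * 'I_n1)%type
  | nk :: rest => (('I_nk * Idx d n1 rest) + ('I_(d - 1) * 'I_nk))%type
  end.

(* index set of the linear constraints cutting out W_k *)
Fixpoint Cdx (d n1 : nat) (ns : seq nat) : finType :=
  match ns with
  | [::] => 'I_(d - 1)
  | nk :: rest => (('I_nk * Cdx d n1 rest) + 'I_(d - 1))%type
  end.

Definition Vec (R : fieldType) (d n1 : nat) (ns : seq nat) := {ffun Idx d n1 ns -> R^o}.
Definition CVec (R : fieldType) (d n1 : nat) (ns : seq nat) := {ffun Cdx d n1 ns -> R^o}.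

(* the constraints: sums of the z_i vanish (level 1); at level k every
   block lies in W_(k-1) and each of the d-1 copies of R^(n_k) has sum 0 *)
Fixpoint constr (R : fieldType) (d n1 : nat) (ns : seq nat) :
    Vec R d n1 ns -> CVec R d n1 ns :=
  match ns return Vec R d n1 ns -> CVec R d n1 ns with
  | [::] => fun x => [ffun a => \sum_(i < n1) x (a, i)]
  | nk :: rest => fun x =>
      [ffun q => match q with
                 | inl (i, j) =>
                     constr (R := R) [ffun p => x (inl (i, p))] j
                 | inr a => \sum_(i < nk) x (inr (a, i))
                 end]
  end.

Definition Wk (R : fieldType) (d n1 : nat) (ns : seq nat) : {vspace Vec R d n1 ns} :=
  lker (linfun (@constr R d n1 ns)).

Fixpoint wr_act (R : fieldType) (d n1 : nat) (ns : seq nat) :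
    SigmaT n1 ns -> Vec R d n1 ns -> Vec R d n1 ns :=
  match ns return SigmaT n1 ns -> Vec R d n1 ns -> Vec R d n1 ns with
  | [::] => fun s x => [ffun p => x (p.1, (s^-1)%g p.2)]
  | nk :: rest => fun X x =>
      [ffun q => match q with
                 | inl (i, p) =>
                     wr_act (R := R) (d := d) (X.1 i)
                       [ffun p' => x (inl ((X.2^-1)%g i, p'))] p
                 | inr (a, i) => x (inr (a, (X.2^-1)%g i))
                 end]
  end.

(* matrix (row-vector convention) of the restriction of f to the subspace U,
   in the basis vbasis U; its determinant is the determinant of f|_U *)
Definition restr_mx (K : fieldType) (vT : vectType K) (U : {vspace vT})
    (f : vT -> vT) : 'M[K]_(\dim U) :=
  \matrix_(i, j) coord (vbasis U) j (f (tnth (vbasis U) i)).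

(* sign of the determinant of f|_U: +1 orientation preserving,
   -1 orientation reversing *)
Definition orient_change (K : realFieldType) (vT : vectType K) (U : {vspace vT})
    (f : vT -> vT) : K := Num.sg (\det (restr_mx U f)).

From HB Require Import structures.
From mathcomp Require Import all_boot all_order all_algebra all_fingroup ring.
Import Order.TTheory GRing.Theory Num.Theory.
Set Implicit Arguments. Unset Strict Implicit. Unset Printing Implicit Defensive.
Local Open Scope ring_scope.

(* In coordinates, Sigma acts on the ambient space of W_k by a permutation P
   of the coordinates, and it permutes the linear constraints cutting out W_k
   by a permutation Q, compatibly with the constraint map c, which is onto.
   Completing a basis of W_k = ker c by preimages under c of the standard basis
   makes the matrix of the action block triangular, with diagonal blocks its
   restriction to W_k and the permutation matrix of Q; hence
   det (Sigma|W_k) * sgn Q = sgn P.  Counting the parities of P and Q along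
   the recursive structure of Sigma_k gives sgn P * sgn Q = orient Sigma. *)

(** * Parity of permutations built from blocks *)

Section ExtendPerm.
Local Open Scope group_scope.
Variables (A B : finType) (m : A -> B).
Hypothesis m_inj : injective m.

Definition ext_perm_fun (p : {perm A}) (b : B) : B :=
  if [pick a | m a == b] is Some a then m (p a) else b.

Lemma ext_perm_fun_inj p : injective (ext_perm_fun p).
Proof.
move=> b1 b2; rewrite /ext_perm_fun.
case: pickP => [a1 /eqP <- | out1]; case: pickP => [a2 /eqP <- | out2] //.
- by move/m_inj/perm_inj ->.
- by move=> e; have := out2 (p a1); rewrite e eqxx.
- by move=> e; have := out1 (p a2); rewrite -e eqxx.
Qed.

Definition ext_perm p : {perm B} := perm (@ext_perm_fun_inj p).

Lemma ext_permE p a : ext_perm p (m a) = m (p a).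
Proof.
rewrite permE /ext_perm_fun.
by case: pickP => [a' /eqP/m_inj -> // | /(_ a)]; rewrite eqxx.
Qed.

Lemma ext_perm_out p b : (forall a, m a != b) -> ext_perm p b = b.
Proof.
move=> out; rewrite permE /ext_perm_fun; case: pickP => // a /eqP ab.
by have := out a; rewrite ab eqxx.
Qed.

Lemma image_or_out (P : B -> Prop) :
  (forall a, P (m a)) -> (forall b, (forall a, m a != b) -> P b) -> forall b, P b.
Proof.
move=> Pm Pout b; case: (pickP (fun a => m a == b)) => [a /eqP <- // | out].
by apply: Pout => a; rewrite out.
Qed.

Lemma ext_perm1 : ext_perm 1 = 1.
Proof.
apply/permP; apply: image_or_out => [a|b out]; last by rewrite ext_perm_out ?perm1.
by rewrite ext_permE !perm1.
Qed.

Lemma ext_permM p q : ext_perm (p * q) = ext_perm p * ext_perm q.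
Proof.
apply/permP; apply: image_or_out => [a|b out]; rewrite permM.
  by rewrite !ext_permE permM.
by rewrite !ext_perm_out.
Qed.

Lemma ext_perm_tperm x y : ext_perm (tperm x y) = tperm (m x) (m y).
Proof.
apply/permP; apply: image_or_out => [a|b out]; last first.
  by rewrite ext_perm_out // tpermD // eq_sym.
rewrite ext_permE; have [->|->|ax ay] := tpermP x y a.
- by rewrite tpermL.
- by rewrite tpermR.
by rewrite tpermD // (inj_eq m_inj) eq_sym; apply/eqP; congruence.
Qed.

Lemma odd_ext_perm p : odd_perm (ext_perm p) = odd_perm p.
Proof.
have [ts -> dts] := prod_tpermP p.
have ext_prod : ext_perm (\prod_(t <- ts) tperm t.1 t.2) =
    \prod_(t <- [seq (m t.1, m t.2) | t <- ts]) tperm t.1 t.2.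
  elim: ts {dts} => [|t ts IH]; first by rewrite !big_nil ext_perm1.
  by rewrite /= !big_cons ext_permM IH ext_perm_tperm.
rewrite ext_prod !odd_perm_prod ?size_map // all_map.
by apply: sub_all dts => t /=; rewrite (inj_eq m_inj).
Qed.

End ExtendPerm.

Section BlockPerms.
Local Open Scope group_scope.
Variables (I J : finType).

Definition fiber_perm_fun (h : I -> {perm J}) (x : I * J) : I * J := (x.1, h x.1 x.2).
Lemma fiber_perm_fun_inj h : injective (fiber_perm_fun h).
Proof. by move=> [i j] [i' j'] [<-] /perm_inj ->. Qed.
Definition fiber_perm h : {perm I * J} := perm (@fiber_perm_fun_inj h).
Lemma fiber_permE h i j : fiber_perm h (i, j) = (i, h i j).
Proof. by rewrite permE. Qed.

Definition base_perm_fun (s : {perm I}) (x : I * J) : I * J := (s x.1, x.2).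
Lemma base_perm_fun_inj s : injective (base_perm_fun s).
Proof. by move=> [i j] [i' j'] [/perm_inj <- <-]. Qed.
Definition base_perm s : {perm I * J} := perm (@base_perm_fun_inj s).
Lemma base_permE s i j : base_perm s (i, j) = (s i, j).
Proof. by rewrite permE. Qed.

Lemma odd_fiber_perm_seq (r : seq I) (h : I -> {perm J}) :
  uniq r -> (forall i, i \notin r -> h i = 1) ->
  odd_perm (fiber_perm h) = odd (\sum_(i <- r) odd_perm (h i)).
Proof.
elim: r h => [|i0 r IH] h /=.
  move=> _ h1; have -> : fiber_perm h = 1.
    by apply/permP => -[i j]; rewrite fiber_permE h1 // !perm1.
  by rewrite odd_perm1 big_nil.
case/andP => i0r r_uniq h1.
pose h' i := if i == i0 then 1 else h i.
have pair_inj : injective (pair i0 : J -> I * J) by move=> j j' [].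
have split_i0 : fiber_perm h = fiber_perm h' * ext_perm pair_inj (h i0).
  apply/permP => -[i j]; rewrite permM !fiber_permE /h'.
  have [-> | ne] := eqVneq i i0; first by rewrite perm1 ext_permE.
  by rewrite ext_perm_out // => j'; apply: contraNneq ne => -[->].
rewrite split_i0 odd_permM odd_ext_perm big_cons oddD addbC oddb.
rewrite (IH h') // => [|i]; last first.
  move=> ir; rewrite /h'; case: eqVneq => // ne.
  by apply: h1; rewrite inE negb_or ne.
congr (_ (+) odd _); rewrite !big_seq; apply: eq_bigr => i ir.
by rewrite /h'; case: eqVneq ir => // ->; rewrite (negbTE i0r).
Qed.

Lemma odd_fiber_perm (h : I -> {perm J}) :
  odd_perm (fiber_perm h) = odd (\sum_(i : I) odd_perm (h i)).
Proof.
by rewrite (@odd_fiber_perm_seq (enum I)) ?enum_uniq ?big_enum // => i; rewrite mem_enum.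
Qed.

End BlockPerms.

Lemma odd_base_perm (I J : finType) (s : {perm I}) :
  odd_perm (base_perm J s) = odd (#|J| * odd_perm s).
Proof.
have swap_inj : injective (fun x : J * I => (x.2, x.1)) by move=> [j i] [j' i'] [-> ->].
have -> : base_perm J s = ext_perm swap_inj (fiber_perm (fun _ : J => s)).
  by apply/permP => -[i j]; rewrite base_permE (ext_permE swap_inj _ (j, i)) fiber_permE.
by rewrite odd_ext_perm odd_fiber_perm sum_nat_const.
Qed.

Section SumPerm.
Local Open Scope group_scope.
Variables (A B : finType).

Definition sum_perm_fun (p : {perm A}) (q : {perm B}) (x : A + B) : A + B :=
  match x with inl a => inl (p a) | inr b => inr (q b) end.
Lemma sum_perm_fun_inj p q : injective (sum_perm_fun p q).
Proof. by move=> [a|b] [a'|b'] //= [] /perm_inj ->. Qed.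
Definition sum_perm p q : {perm A + B} := perm (@sum_perm_fun_inj p q).
Lemma sum_permEl p q a : sum_perm p q (inl a) = inl (p a). Proof. by rewrite permE. Qed.
Lemma sum_permEr p q b : sum_perm p q (inr b) = inr (q b). Proof. by rewrite permE. Qed.

Lemma odd_sum_perm p q : odd_perm (sum_perm p q) = odd_perm p (+) odd_perm q.
Proof.
have inl_inj : injective (@inl A B) by move=> ? ? [].
have inr_inj : injective (@inr A B) by move=> ? ? [].
have -> : sum_perm p q = ext_perm inl_inj p * ext_perm inr_inj q.
  apply/permP => -[a|b]; rewrite permM ?sum_permEl ?sum_permEr.
    by rewrite (ext_permE inl_inj) ext_perm_out.
  by rewrite (ext_perm_out inl_inj) // (ext_permE inr_inj).
by rewrite odd_permM !odd_ext_perm.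
Qed.

End SumPerm.

Section OrdPerm.
Local Open Scope group_scope.
Variable T : finType.

Definition ord_perm (p : {perm T}) : 'S_#|T| := ext_perm (@enum_rank_inj T) p.

Lemma ord_permE p k : enum_val (ord_perm p k) = p (enum_val k).
Proof. by rewrite -[k in LHS]enum_valK ext_permE enum_rankK. Qed.

Lemma odd_ord_perm p : odd_perm (ord_perm p) = odd_perm p.
Proof. exact: odd_ext_perm. Qed.

End OrdPerm.

(** * Determinant of the restriction to the kernel of an equivariant map *)

Section BasisMatrix.
Variables (K : fieldType) (vT : vectType K).

Definition basis_mx n (X : n.-tuple vT) (f : vT -> vT) : 'M[K]_n :=
  \matrix_(i, j) coord X j (f X`_i).

Lemma restr_mxE (U : {vspace vT}) f : restr_mx U f = basis_mx (vbasis U) f.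
Proof. by apply/matrixP => i j; rewrite !mxE (tnth_nth 0). Qed.

Lemma eq_restr_mx (U : {vspace vT}) f g : f =1 g -> restr_mx U f = restr_mx U g.
Proof. by move=> fg; apply/matrixP => i j; rewrite !mxE fg. Qed.

Lemma coord_sum n (X : n.-tuple vT) j m (a : 'I_m -> K) (v : 'I_m -> vT) :
  coord X j (\sum_(i < m) a i *: v i) = \sum_(i < m) a i * coord X j (v i).
Proof. by rewrite linear_sum; apply: eq_bigr => i _; rewrite linearZ. Qed.

Lemma det_basis_mx_eq (U : {vspace vT}) n m (X : n.-tuple vT) (Y : m.-tuple vT)
    (f : {linear vT -> vT}) :
  basis_of U X -> basis_of U Y -> {homo f : u / u \in U} ->
  \det (basis_mx X f) = \det (basis_mx Y f).
Proof.
move=> bX bY fU; have n_m : n = m by rewrite -(size_basis bX) (size_basis bY).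
subst m.
have XU (i : 'I_n) : X`_i \in U by apply: (basis_mem bX); rewrite mem_nth ?size_tuple.
have YU (i : 'I_n) : Y`_i \in U by apply: (basis_mem bY); rewrite mem_nth ?size_tuple.
pose T := \matrix_(i < n, j < n) coord Y j X`_i.
pose T' := \matrix_(i < n, j < n) coord X j Y`_i.
have TT' : T *m T' = 1%:M.
  apply/matrixP => i l; rewrite !mxE -(coord_free i l (basis_free bX)).
  rewrite [in RHS](coord_basis bY (XU i)) coord_sum.
  by apply: eq_bigr => j _; rewrite !mxE.
have change : basis_mx X f = T *m (basis_mx Y f *m T').
  apply/matrixP => i l; rewrite !mxE (coord_basis bY (XU i)) linear_sum.
  under eq_bigr do rewrite linearZ.
  rewrite coord_sum; apply: eq_bigr => j _; rewrite !mxE.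
  rewrite (coord_basis bY (fU _ (YU j))) coord_sum; congr (_ * _).
  by apply: eq_bigr => k _; rewrite !mxE.
by rewrite change !det_mulmx mulrCA -det_mulmx TT' det1 mulr1.
Qed.

Lemma basis_cat_ker (wT : vectType K) (h : 'Hom(vT, wT)) m (Y : m.-tuple vT) :
  basis_of fullv (map h Y) -> basis_of fullv (vbasis (lker h) ++ Y).
Proof.
move=> bhY; rewrite basisEdim size_cat size_tuple; apply/andP; split.
  apply/subvP => v _; rewrite span_cat.
  have [a hv] : exists a : 'I_m -> K, h v = \sum_(k < m) a k *: h Y`_k.
    exists (coord (map_tuple h Y) ^~ (h v)).
    rewrite [LHS](coord_basis bhY (memvf (h v))).
    by apply: eq_bigr => k _; rewrite (nth_map 0) ?size_tuple.
  rewrite -[v](subrK (\sum_(k < m) a k *: Y`_k)); apply: memv_add.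
    rewrite (span_basis (vbasisP _)) memv_ker linearB linear_sum /= hv subr_eq0.
    by apply/eqP; apply: eq_bigr => k _; rewrite linearZ.
  by apply: memv_suml => k _; apply/memvZ/memv_span; rewrite mem_nth ?size_tuple.
have img_full : (fullv <= limg h)%VS.
  rewrite -(span_basis bhY); apply/span_subvP => _ /mapP[y _ ->].
  exact/memv_img/memvf.
rewrite -(limg_ker_dim h fullv) capfv size_tuple leq_add2l.
by rewrite -(size_basis bhY) dimvS.
Qed.

Lemma det_basis_mx_cat (W : {vspace vT}) m (Y : m.-tuple vT) (f : {linear vT -> vT})
    (s : 'S_m) :
  free (vbasis W ++ Y) -> {homo f : u / u \in W} ->
  (forall k : 'I_m, f Y`_k - Y`_(s k) \in W) ->
  \det (basis_mx (cat_tuple (vbasis W) Y) f) = \det (restr_mx W f) * (-1) ^+ s.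
Proof.
move=> freeZ fW fY; set X := vbasis W; set Z := cat_tuple X Y.
have ZX (i : 'I_(\dim W)) : Z`_(lshift m i) = X`_i.
  by rewrite /= nth_cat size_tuple /= ltn_ord.
have ZY (k : 'I_m) : Z`_(rshift (\dim W) k) = Y`_k.
  by rewrite /= nth_cat size_tuple /= ltnNge leq_addr /= addKn.
have XW (i : 'I_(\dim W)) : X`_i \in W.
  by apply: (basis_mem (vbasisP W)); rewrite mem_nth ?size_tuple.
have coordZ_W v : v \in W ->
    (forall j, coord Z (lshift m j) v = coord X j v) /\
    (forall k, coord Z (rshift (\dim W) k) v = 0).
  move=> vW; split=> [j|k]; rewrite {1}(coord_basis (vbasisP W) vW) coord_sum.
    rewrite (bigD1 j) //= -ZX coord_free // eqxx mulr1 big1 ?addr0 // => i ij.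
    by rewrite -ZX coord_free // eq_lshift (negbTE ij) mulr0.
  by apply: big1 => i _; rewrite -ZX coord_free // eq_lrshift mulr0.
rewrite -[basis_mx _ _]submxK.
have -> : ursubmx (basis_mx Z f) = 0.
  by apply/matrixP => i k; rewrite !mxE ZX; case: (coordZ_W _ (fW _ (XW i))).
rewrite det_lblock; congr (\det _ * _).
  apply/matrixP => i j; rewrite restr_mxE !mxE ZX.
  by case: (coordZ_W _ (fW _ (XW i))).
rewrite -det_perm; congr (\det _); apply/matrixP => k l; rewrite !mxE ZY.
rewrite -[f Y`_k](subrK Y`_(s k)) linearD /= (coordZ_W _ (fY k)).2 add0r.
by rewrite -ZY coord_free // eq_rshift.
Qed.

End BasisMatrix.

Section CoordinatePermutation.
Variable R : fieldType.

Definition delta (T : finType) (t : T) : {ffun T -> R^o} := [ffun t' => (t' == t)%:R].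

Definition permv (T : finType) (p : {perm T}) (x : {ffun T -> R^o}) : {ffun T -> R^o} :=
  [ffun t => x (p t)].

Lemma permv_is_linear T p : linear (@permv T p).
Proof. by move=> a x y; apply/ffunP => t; rewrite !ffunE. Qed.
HB.instance Definition _ T p :=
  GRing.isLinear.Build R _ _ _ (@permv T p) (@permv_is_linear T p).

Lemma permv_delta (T : finType) (p : {perm T}) t : permv p (delta t) = delta ((p^-1)%g t).
Proof.
by apply/ffunP => t'; rewrite !ffunE -[in LHS](permKV p t) (inj_eq perm_inj).
Qed.

Definition std_basis (T : finType) : #|T|.-tuple {ffun T -> R^o} :=
  [tuple delta (enum_val k) | k < #|T|].

Lemma std_basis_nth (T : finType) (k : 'I_#|T|) : (std_basis T)`_k = delta (enum_val k).
Proof. by rewrite nth_mktuple. Qed.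

Lemma std_basisP (T : finType) : basis_of fullv (std_basis T).
Proof.
rewrite basisEfree size_tuple dimvf subvf; apply/andP; split; last first.
  by rewrite /dim /= muln1.
apply/freeP => a a0 k.
have {a0} : \sum_(i < #|T|) a i *: delta (enum_val i) = 0.
  by rewrite -[RHS]a0; apply: eq_bigr => i _; rewrite std_basis_nth.
move/(congr1 (fun x : {ffun T -> R^o} => x (enum_val k))) => /=.
rewrite sum_ffunE ffunE (bigD1 k) //= big1 => [|j jk]; rewrite !ffunE.
  by rewrite eqxx addr0 => <-; apply/esym/mulr1.
by rewrite (inj_eq (@enum_val_inj _ _)) eq_sym (negbTE jk) scaler0.
Qed.

Lemma det_std_basis_permv (T : finType) (p : {perm T}) :
  \det (basis_mx (std_basis T) (permv p)) = (-1) ^+ odd_perm p.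
Proof.
have -> : basis_mx (std_basis T) (permv p) = perm_mx (ord_perm (p^-1)%g).
  apply/matrixP => k l; rewrite !mxE std_basis_nth permv_delta.
  by rewrite -ord_permE -std_basis_nth coord_free ?(basis_free (std_basisP T)).
by rewrite det_perm odd_ord_perm odd_permV.
Qed.

End CoordinatePermutation.

Section EquivariantKernel.
Variables (R : fieldType) (I J : finType) (h : 'Hom({ffun I -> R^o}, {ffun J -> R^o})).
Variables (p : {perm I}) (q : {perm J}).
Hypothesis h_equiv : forall x, h (permv p x) = permv q (h x).

Lemma permv_ker_stable : {homo permv p : x / x \in lker h}.
Proof. by move=> x; rewrite !memv_ker h_equiv => /eqP ->; rewrite linear0. Qed.

Hypothesis h_onto : limg h = fullv.

Lemma det_restr_permv_ker :
  \det (restr_mx (lker h) (permv p)) = (-1) ^+ (odd_perm p (+) odd_perm q).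
Proof.
pose Y := [tuple h^-1%VF (delta R (enum_val k)) | k < #|J|].
have hY (k : 'I_#|J|) : h Y`_k = delta R (enum_val k).
  by rewrite nth_mktuple limg_lfunVK // h_onto memvf.
have hY_std : map h Y = std_basis R J.
  apply: (@eq_from_nth _ 0) => [|k]; rewrite size_map !size_tuple // => k_lt.
  by rewrite (nth_map 0) ?size_tuple // (hY (Ordinal k_lt)) (std_basis_nth _ (Ordinal k_lt)).
have bZ := basis_cat_ker (etrans (congr1 _ hY_std) (std_basisP R J)).
pose s := ord_perm (q^-1)%g.
have Y_shift (k : 'I_#|J|) : permv p Y`_k - Y`_(s k) \in lker h.
  by rewrite memv_ker linearB /= h_equiv !hY permv_delta ord_permE subrr.
have := det_basis_mx_cat (basis_free bZ) permv_ker_stable Y_shift.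
rewrite (det_basis_mx_eq bZ (std_basisP R I)) ?det_std_basis_permv => [|u _]; last first.
  exact: memvf.
move=> sign_p; rewrite signr_addb sign_p /s odd_ord_perm odd_permV.
by rewrite -mulrA -expr2 sqrr_sign mulr1.
Qed.

End EquivariantKernel.

(** * The action and the constraints as coordinate permutations *)

Fixpoint idx_perm (d n1 : nat) (ns : seq nat) : SigmaT n1 ns -> {perm Idx d n1 ns} :=
  match ns return SigmaT n1 ns -> {perm Idx d n1 ns} with
  | [::] => fun s => fiber_perm (fun _ : 'I_(d - 1) => s^-1)%g
  | nk :: rest => fun X =>
      sum_perm (fiber_perm (fun i => idx_perm d (X.1 i)) * base_perm _ X.2^-1)%g
               (fiber_perm (fun _ : 'I_(d - 1) => X.2^-1))%g
  end.

Fixpoint cdx_perm (d n1 : nat) (ns : seq nat) : SigmaT n1 ns -> {perm Cdx d n1 ns} :=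
  match ns return SigmaT n1 ns -> {perm Cdx d n1 ns} with
  | [::] => fun _ => 1%g
  | nk :: rest => fun X =>
      sum_perm (fiber_perm (fun i => cdx_perm d (X.1 i)) * base_perm _ X.2^-1)%g 1%g
  end.

Lemma idx_perm_cons d n1 nk rest (X : SigmaT n1 (nk :: rest)) :
  idx_perm d X =
  sum_perm (fiber_perm (fun i => idx_perm d (X.1 i)) * base_perm _ X.2^-1)%g
           (fiber_perm (fun _ : 'I_(d - 1) => X.2^-1))%g.
Proof. by []. Qed.

Lemma cdx_perm_cons d n1 nk rest (X : SigmaT n1 (nk :: rest)) :
  cdx_perm d X =
  sum_perm (fiber_perm (fun i => cdx_perm d (X.1 i)) * base_perm _ X.2^-1)%g 1%g.
Proof. by []. Qed.

Section Model.
Variable R : fieldType.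

Lemma wr_act_nil d n1 (s : SigmaT n1 [::]) (x : Vec R d n1 [::]) a i :
  wr_act s x (a, i) = x (a, (s^-1)%g i).
Proof. by rewrite ffunE. Qed.

Lemma wr_act_inl d n1 nk rest (X : SigmaT n1 (nk :: rest)) (x : Vec R d n1 (nk :: rest)) i p :
  wr_act X x (inl (i, p)) = wr_act (X.1 i) [ffun p' => x (inl ((X.2^-1)%g i, p'))] p.
Proof. by rewrite ffunE. Qed.

Lemma constr_nil d n1 (x : Vec R d n1 [::]) a : constr x a = \sum_(i < n1) x (a, i).
Proof. by rewrite ffunE. Qed.

Lemma constr_inl d n1 nk rest (x : Vec R d n1 (nk :: rest)) i j :
  constr x (inl (i, j)) = constr [ffun p => x (inl (i, p))] j.
Proof. by rewrite ffunE. Qed.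

Lemma constr_inr d n1 nk rest (x : Vec R d n1 (nk :: rest)) a :
  constr x (inr a) = \sum_(i < nk) x (inr (a, i)).
Proof. by rewrite ffunE. Qed.

Lemma wr_actE d n1 ns (S : SigmaT n1 ns) (x : Vec R d n1 ns) :
  wr_act S x = permv (idx_perm d S) x.
Proof.
elim: ns S x => [|nk rest IH] S x; apply/ffunP.
  by move=> -[a i]; rewrite wr_act_nil [RHS]ffunE fiber_permE.
move=> -[[i p]|[a i]]; rewrite [RHS]ffunE idx_perm_cons ?sum_permEl ?sum_permEr.
  by rewrite wr_act_inl IH !ffunE permM fiber_permE base_permE.
by rewrite ffunE fiber_permE.
Qed.

Lemma constr_is_linear d n1 ns : linear (@constr R d n1 ns).
Proof.
elim: ns => [|nk rest IH] a x y; apply/ffunP.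
  move=> b; rewrite !ffunE scaler_sumr -big_split.
  by apply: eq_bigr => i _; rewrite !ffunE.
move=> [[i j]|b]; rewrite [RHS]ffunE.
  rewrite !constr_inl.
  have -> : [ffun p => (a *: x + y) (inl (i, p))] =
            a *: [ffun p => x (inl (i, p))] + [ffun p => y (inl (i, p))].
    by apply/ffunP => p; rewrite !ffunE.
  by rewrite IH !ffunE.
rewrite [X in _ = X + _]ffunE !constr_inr scaler_sumr -big_split.
by apply: eq_bigr => i _; rewrite !ffunE.
Qed.

End Model.

HB.instance Definition _ (R : fieldType) d n1 ns :=
  GRing.isLinear.Build R (Vec R d n1 ns) (CVec R d n1 ns) _ (@constr R d n1 ns)
    (@constr_is_linear R d n1 ns).

Section Constraints.
Variable R : fieldType.

Lemma constr_wr_act d n1 ns (S : SigmaT n1 ns) (x : Vec R d n1 ns) :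
  constr (wr_act S x) = permv (cdx_perm d S) (constr x).
Proof.
elim: ns S x => [|nk rest IH] S x; apply/ffunP.
  move=> a; rewrite [RHS]ffunE perm1 !constr_nil.
  rewrite [RHS](reindex_inj (@perm_inj _ S^-1%g)).
  by apply: eq_bigr => i _; rewrite wr_act_nil.
move=> -[[i j]|a]; rewrite [RHS]ffunE cdx_perm_cons ?sum_permEl ?sum_permEr.
  rewrite permM fiber_permE base_permE !constr_inl.
  have -> : [ffun p => wr_act S x (inl (i, p))] =
            wr_act (S.1 i) [ffun p' => x (inl ((S.2^-1)%g i, p'))].
    by apply/ffunP => p; rewrite ffunE wr_act_inl.
  by rewrite IH ffunE.
rewrite perm1 !constr_inr [RHS](reindex_inj (@perm_inj _ S.2^-1%g)).
by apply: eq_bigr => i _; rewrite ffunE.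
Qed.

Lemma sum_ord_onto n (a : R) : (0 < n)%N -> exists y : 'I_n -> R, \sum_i y i = a.
Proof.
case: n => // n _; exists (fun i => if i == ord0 then a else 0).
by rewrite big_ord_recl eqxx big1 ?addr0.
Qed.

Lemma constr_onto d n1 ns : (0 < n1)%N -> all (fun n => 0 < n)%N ns ->
  forall z : CVec R d n1 ns, exists y, constr y = z.
Proof.
move=> n1_gt0; elim: ns => [|nk rest IH] /=.
  move=> _ z; have [y yE] := fin_all_exists (fun a => sum_ord_onto (z a) n1_gt0).
  by exists [ffun p => y p.1 p.2]; apply/ffunP => a; rewrite constr_nil -yE;
     apply: eq_bigr => i _; rewrite ffunE.
case/andP => nk_gt0 /IH{}IH z.
have [u uE] := fin_all_exists (fun i => IH [ffun j => z (inl (i, j))]).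
have [w wE] := fin_all_exists (fun a => sum_ord_onto (z (inr a)) nk_gt0).
pose y := [ffun q => match q with inl (i, p) => u i p | inr (a, k) => w a k end].
exists y; apply/ffunP => -[[i j]|a].
  rewrite constr_inl (_ : [ffun p => y (inl (i, p))] = u i) ?uE ?ffunE //.
  by apply/ffunP => p; rewrite !ffunE.
by rewrite constr_inr -wE; apply: eq_bigr => k _; rewrite ffunE.
Qed.

Lemma limg_constr d n1 ns : (0 < n1)%N -> all (fun n => 0 < n)%N ns ->
  limg (linfun (@constr R d n1 ns)) = fullv.
Proof.
move=> n1_gt0 ns_gt0; apply/eqP; rewrite eqEsubv subvf; apply/subvP => z _.
have [y <-] := constr_onto n1_gt0 ns_gt0 z.
by rewrite -lfunE memv_img ?memvf.
Qed.

End Constraints.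

Lemma odd_card_Idx_Cdx d n1 ns :
  odd (#|Idx d n1 ns| + #|Cdx d n1 ns| + (d - 1)) = odd ((d - 1) * (n1 * \prod_(n <- ns) n)).
Proof.
elim: ns => [|nk rest IH] /=.
  by rewrite big_nil muln1 card_prod !card_ord -addnA addnn oddD odd_double addbF mulnC.
rewrite !card_sum !card_prod !card_ord big_cons.
set I := #|Idx d n1 rest|; set C := #|Cdx d n1 rest|; set P := \prod_(n <- rest) n.
have -> : (nk * I + (d - 1) * nk + (nk * C + (d - 1)) + (d - 1) =
           nk * (I + C + (d - 1)) + (d - 1).*2)%N by rewrite -addnn; ring.
have -> : ((d - 1) * (n1 * (nk * P)) = nk * ((d - 1) * (n1 * P)))%N by ring.
by rewrite oddD odd_double addbF oddM IH -oddM.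
Qed.

Lemma sgnpE n (s : 'S_n) : sgnp s = (-1) ^+ odd_perm s.
Proof. by []. Qed.

Lemma orient_cons d n1 nk rest (X : SigmaT n1 (nk :: rest)) :
  orient d X =
  sgnp X.2 ^+ ((d - 1) * (n1 * \prod_(n <- rest) n)) * \prod_(i < nk) orient d (X.1 i).
Proof. by []. Qed.

Lemma orient_sign d n1 ns (S : SigmaT n1 ns) :
  orient d S = (-1) ^+ (odd_perm (idx_perm d S) + odd_perm (cdx_perm d S)).
Proof.
elim: ns S => [|nk rest IH] S.
  rewrite /= odd_fiber_perm odd_perm1 addn0 sum_nat_const card_ord odd_permV.
  by rewrite signr_odd sgnpE -exprM mulnC.
rewrite orient_cons (eq_bigr _ (fun i _ => IH (S.1 i))).
rewrite sgnpE prodrXr -exprM -exprD -[LHS]signr_odd -[RHS]signr_odd; congr (_ ^+ nat_of_bool _).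
rewrite idx_perm_cons cdx_perm_cons !odd_sum_perm !odd_permM !odd_fiber_perm.
rewrite !odd_base_perm odd_perm1 addbF !sum_nat_const !card_ord odd_permV.
(* The rewrites above unfolded the fixpoints [Idx] and [Cdx] at [rest]. *)
rewrite -/(Idx d n1 rest) -/(Cdx d n1 rest).
rewrite big_split oddD [odd (_ * _)]oddM.
rewrite -odd_card_Idx_Cdx !oddD !oddM !oddb.
set A := odd (\sum_i _); set C := odd (\sum_i _); clearbody A C.
move: A C (odd_perm S.2) (odd #|Idx d n1 rest|) (odd #|Cdx d n1 rest|) (odd (d - 1)).
by do 6!case.
Qed.

Lemma orientM d n1 ns (S T : SigmaT n1 ns) :
  orient d (Smul S T) = orient d S * orient d T.
Proof.
elim: ns S T => [|nk rest IH] S T.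
  by rewrite /= !sgnpE odd_permM signr_addb exprMn mulrC.
rewrite !orient_cons /= !sgnpE odd_permM signr_addb exprMn.
rewrite (eq_bigr (fun i => orient d (S.1 i) * orient d (T.1 (S.2^-1%g i)))); last first.
  by move=> i _; rewrite ffunE IH.
rewrite big_split /= [X in _ * (_ * X)](reindex_inj (@perm_inj _ S.2^-1%g)) /=.
by rewrite [X in X * (_ * _) = _]mulrC mulrACA.
Qed.

Unset Implicit Arguments.

Theorem lemma3p6 (R : realFieldType) (d n1 : nat) (ns : seq nat) :
  (1 <= d)%N -> (2 <= n1)%N -> all (fun n => 2 <= n)%N ns ->
  (forall S : SigmaT n1 ns,
     (forall x, x \in Wk R d n1 ns -> wr_act (d := d) S x \in Wk R d n1 ns) /\
     orient_change (Wk R d n1 ns) (wr_act (d := d) S) = (orient d S)%:~R) /\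
  (forall S T : SigmaT n1 ns, orient d (Smul S T) = orient d S * orient d T).
Proof.
move=> _ n1_ge2 ns_ge2; split=> [S|]; last exact: orientM.
have ns_gt0 : all (fun n => 0 < n)%N ns by apply: sub_all ns_ge2 => n /ltnW.
have constr_equiv (x : Vec R d n1 ns) :
    linfun (@constr R d n1 ns) (permv (idx_perm d S) x) =
    permv (cdx_perm d S) (linfun (@constr R d n1 ns) x).
  by rewrite !lfunE -wr_actE; apply: constr_wr_act.
have constr_full := limg_constr R d (ltnW n1_ge2) ns_gt0.
split=> [x xW|]; first by rewrite wr_actE (permv_ker_stable constr_equiv).
rewrite /orient_change (eq_restr_mx _ (wr_actE S)).
rewrite (det_restr_permv_ker constr_equiv constr_full).
by rewrite orient_sign intr_sign sgrX sgrN1 -signr_odd oddD !oddb.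
Qed.
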